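(* Let $F:\mathbb{R}^p\to\mathbb{R}$ be bounded from below by a constant $F_{l.b.}$, i.e. $F(x)\ge F_{l.b.}$ for all $x\in\mathbb{R}^p$, and suppose that the gradient $\dot F(x)=\nabla F(x)$ exists for every $x\in\mathbb{R}^p$ and that $\dot F$ is locally Lipschitz continuous on $\mathbb{R}^p$. Let $x_0\in\mathbb{R}^p$, let $\{M_k: k\ge 0\}\subset\mathbb{R}^{p\times p}$ be symmetric positive definite matrices, and define $x_{k+1}=x_k-M_k\dot F(x_k)$ for $k\ge 0$. Then for every $R\ge 0$ there exists a constant $C_R>0$ such that for all $k\ge 0$, $$[F(x_{k+1})-F_{l.b.}]\,\chi_{k+1}^0(R)\le \Big[F(x_k)-F_{l.b.}-\dot F(x_k)^\intercal M_k\dot F(x_k)+C_R\|M_k\dot F(x_k)\|_2^2\Big]\chi_k^0(R).$$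
   Context: For $R>0$ (or $R\ge 0$), $z\in\mathbb{R}^p$ and $k\ge 0$, $\chi_k^z(R)$ equals $1$ if $\|x_j-z\|_2\le R$ for all $0\le j\le k$, and equals $0$ otherwise. In particular $\chi_k^0(R)=1$ iff $\|x_j\|_2\le R$ for all $j\le k$. *)

From HB Require Import structures.
From mathcomp Require Import all_boot all_order all_algebra.
From mathcomp Require Import all_classical all_reals all_analysis.
Set Implicit Arguments. Unset Strict Implicit. Unset Printing Implicit Defensive.
Import Order.TTheory GRing.Theory Num.Theory.
Import numFieldNormedType.Exports.
Local Open Scope ring_scope.

Definition dotv (R : realType) (p : nat) (u v : 'rV[R]_p) : R :=
  \sum_(i < p) u 0 i * v 0 i.

Definition norm2 (R : realType) (p : nat) (v : 'rV[R]_p) : R :=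
  Num.sqrt (\sum_(i < p) v 0 i ^+ 2).

Definition is_gradient (R : realType) (p : nat)
    (F : 'rV[R]_p -> R) (G : 'rV[R]_p -> 'rV[R]_p) : Prop :=
  forall x : 'rV[R]_p, differentiable F x /\ forall v, 'd F x v = dotv (G x) v.

Definition locally_lipschitz (R : realType) (p : nat)
    (G : 'rV[R]_p -> 'rV[R]_p) : Prop :=
  forall x : 'rV[R]_p, exists r : R, 0 < r /\ exists L : R,
    forall y z : 'rV[R]_p, norm2 (y - x) < r -> norm2 (z - x) < r ->
      norm2 (G y - G z) <= L * norm2 (y - z).

Definition spd (R : realType) (p : nat) (M : 'M[R]_p) : Prop :=
  M^T = M /\ forall v : 'rV[R]_p, v != 0 -> 0 < (v *m M *m v^T) 0 0.

Definition chi (R : realType) (p : nat) (x : nat -> 'rV[R]_p)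
    (k : nat) (z : 'rV[R]_p) (Rad : R) : R :=
  if [forall j : 'I_k.+1, norm2 (x j - z) <= Rad] then 1 else 0.

From HB Require Import structures.
From mathcomp Require Import all_boot all_order all_algebra.
From mathcomp Require Import all_classical all_reals all_analysis.
From mathcomp Require Import ring lra finmap.
Set Implicit Arguments. Unset Strict Implicit. Unset Printing Implicit Defensive.
Import Order.TTheory GRing.Theory Num.Theory.
Import numFieldNormedType.Exports.
Local Open Scope ring_scope.

(* On a ball, the locally Lipschitz gradient is Lipschitz: by compactness a
   Lebesgue number of a finite cover by Lipschitz balls handles nearby points,
   and the boundedness of the gradient on the ball handles distant ones.  The
   mean value theorem then gives the descent inequality
   F y <= F x + <DF x, y - x> + K |y - x|^2 for x, y in the ball, which is the
   case where x_(k+1) stays in the ball.  When x_k is in the ball but x_(k+1)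
   is not, the right-hand side is still nonnegative: a short gradient step from
   x_k stays in a slightly larger ball, so F x_k - F_lb >= s |DF x_k|^2, and
   Young's inequality absorbs the cross term into C |M_k DF x_k|^2. *)

Section Euclidean.
Variables (R : realType) (p : nat).
Implicit Types (u v w : 'rV[R]_p).

Lemma dotvC u v : dotv u v = dotv v u.
Proof. by apply: eq_bigr => i _; rewrite mulrC. Qed.

Lemma dotvBl u w v : dotv (u - w) v = dotv u v - dotv w v.
Proof. by rewrite /dotv -sumrB; apply: eq_bigr => i _; rewrite !mxE mulrBl. Qed.

Lemma dotvNr u v : dotv u (- v) = - dotv u v.
Proof. by rewrite /dotv -sumrN; apply: eq_bigr => i _; rewrite !mxE mulrN. Qed.

Lemma dotvZr (s : R) u v : dotv u (s *: v) = s * dotv u v.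
Proof. by rewrite /dotv mulr_sumr; apply: eq_bigr => i _; rewrite !mxE mulrCA. Qed.

Lemma norm2_sqr v : norm2 v ^+ 2 = \sum_(i < p) v 0 i ^+ 2.
Proof. by rewrite /norm2 sqr_sqrtr // sumr_ge0 // => i _; rewrite sqr_ge0. Qed.

Lemma dotvv v : dotv v v = norm2 v ^+ 2.
Proof. by rewrite norm2_sqr; apply: eq_bigr => i _; rewrite expr2. Qed.

Lemma norm2_ge0 v : 0 <= norm2 v.
Proof. exact: sqrtr_ge0. Qed.

Lemma norm2N v : norm2 (- v) = norm2 v.
Proof. by congr Num.sqrt; apply: eq_bigr => i _; rewrite mxE sqrrN. Qed.

Lemma norm2Z (s : R) v : norm2 (s *: v) = `|s| * norm2 v.
Proof.
rewrite /norm2 -sqrtr_sqr -sqrtrM ?sqr_ge0 // mulr_sumr.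
by congr Num.sqrt; apply: eq_bigr => i _; rewrite mxE exprMn.
Qed.

Lemma lagrange_identity (a b : 'I_p -> R) :
  \sum_i \sum_j (a i * b j - a j * b i) ^+ 2 =
  2 * ((\sum_i a i ^+ 2) * (\sum_j b j ^+ 2) - (\sum_i a i * b i) ^+ 2).
Proof.
have expand i j : (a i * b j - a j * b i) ^+ 2 =
    a i ^+ 2 * b j ^+ 2 + b i ^+ 2 * a j ^+ 2 - 2 * ((a i * b i) * (a j * b j)).
  by ring.
under eq_bigr => i _ do rewrite (eq_bigr _ (fun j _ => expand i j)) sumrB big_split /=.
rewrite sumrB big_split /= [X in _ + X - _]exchange_big /=.
under [X in _ + X - _]eq_bigr => j _ do under eq_bigr => i _ do rewrite mulrC.
under [X in _ - X]eq_bigr => i _ do rewrite -mulr_sumr.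
rewrite -mulr_sumr [_ ^+ 2]expr2 !big_distrlr /=; ring.
Qed.

Lemma dotv_le_norm2 u v : dotv u v <= norm2 u * norm2 v.
Proof.
have lagrange := lagrange_identity (fun i => u 0 i) (fun i => v 0 i).
have : `|dotv u v| ^+ 2 <= (norm2 u * norm2 v) ^+ 2.
  rewrite real_normK ?num_real // exprMn !norm2_sqr -subr_ge0.
  rewrite -(@pmulr_rge0 _ 2) // -lagrange /dotv.
  by apply: sumr_ge0 => i _; apply: sumr_ge0 => j _; rewrite sqr_ge0.
rewrite ler_sqr ?nnegrE ?mulr_ge0 ?norm2_ge0 //.
exact: le_trans (ler_norm _).
Qed.

Lemma norm2D u v : norm2 (u + v) <= norm2 u + norm2 v.
Proof.
have expand : norm2 (u + v) ^+ 2 = norm2 u ^+ 2 + 2 * dotv u v + norm2 v ^+ 2.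
  rewrite !norm2_sqr /dotv mulr_sumr -!big_split /=.
  by apply: eq_bigr => i _; rewrite mxE; ring.
rewrite -ler_sqr ?nnegrE ?addr_ge0 ?norm2_ge0 // expand.
have := dotv_le_norm2 u v; nra.
Qed.

Lemma mx_norm_le_norm2 v : `|v| <= norm2 v.
Proof.
rewrite [ `|v| ]mx_normrE; apply/bigmax_leP; split => [|[i j] _] /=; first exact: norm2_ge0.
rewrite (ord1 i) -ler_sqr ?nnegrE ?norm2_ge0 // real_normK ?num_real // norm2_sqr.
by rewrite (bigD1 j) //= lerDl; apply: sumr_ge0 => k _; rewrite sqr_ge0.
Qed.

Lemma norm2_le_mx_norm v : norm2 v <= Num.sqrt p%:R * `|v|.
Proof.
rewrite -[ `|v| ]ger0_norm // -sqrtr_sqr -sqrtrM // ler_sqrt ?mulr_ge0 ?sqr_ge0 //.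
apply: le_trans (_ : _ <= \sum_(i < p) `|v| ^+ 2) _; last first.
  by rewrite sumr_const card_ord mulr_natl.
apply: ler_sum => i _; rewrite -real_normK ?num_real // ler_sqr ?nnegrE //.
by rewrite [ `|v| ]mx_normrE; apply/bigmax_geP; right; exists (0, i).
Qed.

Lemma dotv_le_young (e : R) u v : 0 < e ->
  dotv u v <= e * norm2 v ^+ 2 + (4 * e)^-1 * norm2 u ^+ 2.
Proof.
move=> e_gt0; apply: le_trans (dotv_le_norm2 u v) _; rewrite -subr_ge0.
have -> : e * norm2 v ^+ 2 + (4 * e)^-1 * norm2 u ^+ 2 - norm2 u * norm2 v =
    (4 * e)^-1 * (2 * e * norm2 v - norm2 u) ^+ 2 by field; rewrite gt_eqF.
by rewrite mulr_ge0 ?sqr_ge0 // invr_ge0 mulr_ge0 // ltW.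
Qed.
End Euclidean.

Lemma compact_uniform_ball_cover (R : realType) (V : normedModType R)
    (A : set V) (r : V -> R) : compact A -> (forall c, 0 < r c) ->
  exists (D : seq V) (d : R), 0 < d /\
    forall y, A y -> exists2 c, c \in D & forall z, `|z - y| < d -> `|z - c| < r c.
Proof.
move=> cA r_gt0; rewrite compact_cover in cA.
have [D _ cover_A] : finite_subset_cover A (fun c => ball c (r c / 2)) A.
  apply: cA => [c _|y Ay]; first exact: ball_open.
  by exists y => //; apply: ballxx; rewrite divr_gt0.
exists D, (\big[Num.min/1]_(c <- D) (r c / 2)); split.
  by elim/big_ind: _ => // [a b a0 b0|c _]; rewrite ?lt_min ?a0 ?divr_gt0.
move=> y /cover_A [c Dc]; rewrite -ball_normE /= => yc; exists c => // z zy.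
have d_le : \big[Num.min/1]_(c <- D) (r c / 2) <= r c / 2 by exact: ge_bigmin_seq.
rewrite -(subrKA y) (le_lt_trans (ler_normD _ _)) // (splitr (r c)).
by rewrite ltrD ?(lt_le_trans zy d_le) // distrC.
Qed.

(* Balls are taken for the sup norm [`|_|] of ['rV], which carries its
   topology; [norm2] only enters through the Lipschitz hypothesis and [chi]. *)
Lemma mx_norm_ball_compact (R : realType) (p : nat) (R1 : R) :
  compact [set y : 'rV[R]_p | `|y| <= R1]%classic.
Proof.
apply: bounded_closed_compact.
  by exists R1; split => [|M R1M y /= Ay]; [exact: num_real | rewrite (le_trans Ay) // ltW].
have -> : [set y : 'rV[R]_p | `|y| <= R1]%classic = closed_ball_ Num.norm 0 R1.
  by apply/funext => y; rewrite /closed_ball_ /= sub0r normrN.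
exact: (@closed_closed_ball_ R _ (0 : 'rV[R]_p) R1).
Qed.

Section LocallyLipschitz.
Variables (R : realType) (p : nat) (G : 'rV[R]_p -> 'rV[R]_p).
Hypothesis lipG : locally_lipschitz G.

Lemma locally_lipschitz_uniform_on_ball (R1 : R) :
  exists d L B : R, [/\ 0 < d, 0 <= L, 0 <= B,
    forall y z, `|y| <= R1 -> `|z - y| < d -> norm2 (G z - G y) <= L * norm2 (z - y)
  & forall y, `|y| <= R1 -> norm2 (G y) <= B].
Proof.
have [r r_lip] := choice lipG.
have [L L_lip] := choice (fun c => (r_lip c).2).
pose k : R := Num.sqrt p%:R + 1.
have k_gt0 : 0 < k by rewrite ltr_wpDl.
have near_c c z : `|z - c| < r c / k -> norm2 (z - c) < r c.
  rewrite ltr_pdivlMr // => zc.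
  apply: le_lt_trans (norm2_le_mx_norm _) (le_lt_trans _ zc).
  by rewrite mulrC ler_wpM2l // lerDl.
have [D [d [d_gt0 coverD]]] := compact_uniform_ball_cover (@mx_norm_ball_compact _ _ R1)
  (fun c => divr_gt0 (r_lip c).1 k_gt0).
exists d, (\big[Num.max/0]_(c <- D) `|L c|),
  (\big[Num.max/0]_(c <- D) (norm2 (G c) + `|L c| * r c)).
have center_near y c : (forall z, `|z - y| < d -> `|z - c| < r c / k) -> norm2 (y - c) < r c.
  by move=> /(_ y); rewrite subrr normr0 => /(_ d_gt0) /near_c.
split=> // [||y z /coverD [c Dc /[dup] /center_near yc zc] zy|y /coverD [c Dc /center_near yc]].
1,2: exact: bigmax_ge_id.
- apply: le_trans (L_lip c z y (near_c _ _ (zc _ zy)) yc) _.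
  rewrite ler_wpM2r ?norm2_ge0 //.
  exact: le_trans (ler_norm _) (le_bigmax_seq _ _ _ _ Dc isT).
- apply: (bigmax_sup_seq _ _ _ _ _ Dc isT); rewrite -[G y](addrNK (G c)) addrC.
  apply: le_trans (norm2D _ _) _; rewrite lerD2l.
  have cc : norm2 (c - c) < r c by apply: near_c; rewrite subrr normr0 divr_gt0 ?(r_lip c).1.
  apply: le_trans (L_lip c y c yc cc) _.
  rewrite (le_trans (ler_wpM2r (norm2_ge0 _) (ler_norm (L c)))) //.
  by rewrite ler_wpM2l // ltW.
Qed.

Lemma lipschitz_on_ball (R1 : R) : exists2 K, 0 <= K &
  forall y z, `|y| <= R1 -> `|z| <= R1 -> norm2 (G z - G y) <= K * norm2 (z - y).
Proof.
have [d [L [B [d_gt0 L_ge0 B_ge0 lipL boundB]]]] := locally_lipschitz_uniform_on_ball R1.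
exists (L + 2 * B / d) => [|y z yR zR]; first by rewrite addr_ge0 // divr_ge0 ?mulr_ge0 // ltW.
have [zy_near|zy_far] := ltP `|z - y| d.
  rewrite mulrDl (le_trans (lipL y z yR zy_near)) // lerDl.
  by rewrite mulr_ge0 ?norm2_ge0 // divr_ge0 ?mulr_ge0 // ltW.
have far_bound : norm2 (G z - G y) <= 2 * B / d * norm2 (z - y).
  have norm2_far : d <= norm2 (z - y) := le_trans zy_far (mx_norm_le_norm2 _).
  apply: (@le_trans _ _ (2 * B)).
    apply: le_trans (norm2D _ _) _; rewrite norm2N.
    by have := boundB z zR; have := boundB y yR; lra.
  rewrite -{1}(divfK (lt0r_neq0 d_gt0) (2 * B)) ler_wpM2l //.
  by rewrite divr_ge0 ?mulr_ge0 // ltW.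
by rewrite (le_trans far_bound) // ler_wpM2r ?norm2_ge0 // lerDr.
Qed.
End LocallyLipschitz.

Section Gradient.
Variables (R : realType) (p : nat) (F : 'rV[R]_p -> R) (G : 'rV[R]_p -> 'rV[R]_p).
Hypothesis gradF : is_gradient F G.

Lemma gradient_mean_value x h : exists2 c : R, 0 <= c <= 1 &
  F (x + h) - F x = dotv (G (x + c *: h)) h.
Proof.
pose g t : 'rV[R]_p := x + t *: h.
have g_diff (t : R) : differentiable g t /\ 'd g t = *:%R^~ h :> (R -> 'rV[R]_p).
  have dg : is_diff t g (0 + *:%R^~ h) by apply: is_diffD.
  by split; [exact: ex_diff | rewrite diff_val add0r].
have Fg_deriv (t : R) : is_derive t 1 (F \o g) (dotv (G (x + t *: h)) h).
  have [dFg dF] := gradF (g t).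
  have dFgt : differentiable (F \o g) t by apply: differentiable_comp; [exact: (g_diff t).1|].
  apply: DeriveDef; first exact: diff_derivable.
  by rewrite deriveE // diff_comp ?(g_diff t).1 //= (g_diff t).2 /= dF scale1r.
have Fg_cont : {within `[0, 1], continuous (F \o g)}%classic.
  by apply: derivable_within_continuous => t _; have := Fg_deriv t; case.
have [c c01 mvt] := MVT_segment ler01 (fun t _ => Fg_deriv t) Fg_cont.
exists c; first by move: c01; rewrite in_itv.
by move: mvt; rewrite /= /g scale1r scale0r addr0 subr0 mulr1.
Qed.

Hypothesis lipG : locally_lipschitz G.

Lemma descent_on_ball (R1 : R) : exists2 K, 0 <= K &
  forall x y, `|x| <= R1 -> `|y| <= R1 ->
    F y <= F x + dotv (G x) (y - x) + K * norm2 (y - x) ^+ 2.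
Proof.
have [K K_ge0 lipK] := lipschitz_on_ball lipG R1.
exists K => // x y xR yR.
have [c /andP[c_ge0 c_le1]] := gradient_mean_value x (y - x).
rewrite subrKC => mvt.
set h := y - x in mvt *; set z := x + c *: h in mvt.
have zR : `|z| <= R1.
  have -> : z = (1 - c) *: x + c *: y by rewrite /z /h scalerBr scalerBl scale1r addrA addrAC.
  rewrite (le_trans (ler_normD _ _)) // !normrZ !ger0_norm ?subr_ge0 //.
  have : (1 - c) * `|x| <= (1 - c) * R1 by rewrite ler_wpM2l ?subr_ge0.
  have : c * `|y| <= c * R1 by rewrite ler_wpM2l.
  lra.
have zx : z - x = c *: h by rewrite /z addrC addKr.
have step : F y - F x - dotv (G x) h <= K * norm2 h ^+ 2.
  rewrite mvt -dotvBl (le_trans (dotv_le_norm2 _ _)) //.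
  rewrite expr2 mulrA ler_wpM2r ?norm2_ge0 //.
  rewrite (le_trans (lipK _ _ xR zR)) // zx norm2Z ger0_norm //.
  by rewrite ler_wpM2l // ler_piMl ?norm2_ge0.
lra.
Qed.

Lemma gradient_sqr_le_gap (Flb : R) : (forall y, Flb <= F y) ->
  forall Rad : R, exists2 s, 0 < s &
    forall y, `|y| <= Rad -> s * norm2 (G y) ^+ 2 <= F y - Flb.
Proof.
move=> F_lb Rad.
have [K K_ge0 descK] := descent_on_ball (Rad + 1).
have [_ [_ [B [_ _ B_ge0 _ boundB]]]] := locally_lipschitz_uniform_on_ball lipG (Rad + 1).
(* t B <= 1 keeps the step t DF y inside the ball of radius Rad + 1, and
   2 K t <= 1 makes it decrease F by at least t/2 |DF y|^2. *)
have den_gt0 : 0 < B + 2 * K + 1 by rewrite ltr_wpDl // addr_ge0 // mulr_ge0.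
pose t := (B + 2 * K + 1)^-1.
have t_gt0 : 0 < t by rewrite invr_gt0.
have t_den : t * (B + 2 * K + 1) = 1 by rewrite mulVf // lt0r_neq0.
exists (t / 2) => [|y yR]; first by rewrite divr_gt0.
have yR1 : `|y| <= Rad + 1 by rewrite (le_trans yR) // lerDl.
have Gy_le_B := boundB y yR1.
have step_R1 : `|y - t *: G y| <= Rad + 1.
  rewrite (le_trans (ler_normB _ _)) // lerD // normrZ gtr0_norm //.
  rewrite (le_trans (ler_wpM2l (ltW t_gt0) (mx_norm_le_norm2 _))) //.
  have := norm2_ge0 (G y); nra.
have := descK y _ yR1 step_R1; have := F_lb (y - t *: G y).
rewrite [y - _ - y]addrAC subrr add0r dotvNr norm2N dotvZr norm2Z gtr0_norm // dotvv.
have Kt : 2 * K * t <= 1 by have := mulr_ge0 (ltW t_gt0) B_ge0; nra.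
have := mulr_ge0 (ltW t_gt0) (sqr_ge0 (norm2 (G y))); nra.
Qed.
End Gradient.

Lemma chiS (R : realType) (p : nat) (x : nat -> 'rV[R]_p) k z Rad :
  chi x k.+1 z Rad = if norm2 (x k.+1 - z) <= Rad then chi x k z Rad else 0.
Proof.
rewrite /chi; have [xk1_in|xk1_out] := boolP (norm2 (x k.+1 - z) <= Rad).
  congr (if _ then _ else _); apply/forallP/forallP => [all_in j|all_in j].
    exact: all_in (widen_ord (leqnSn _) j).
  have [jk|] := ltnP j k.+1; first exact: all_in (Ordinal jk).
  by rewrite leq_eqVlt ltnNge -ltnS ltn_ord orbF => /eqP <-.
by case: ifP => // /forallP /(_ ord_max); rewrite (negbTE xk1_out).
Qed.

Theorem lemma3p1 (R : realType) (p : nat) (F : 'rV[R]_p -> R) (Flb : R)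
    (Fdot : 'rV[R]_p -> 'rV[R]_p) (M : nat -> 'M[R]_p) (x : nat -> 'rV[R]_p) :
  (forall y, Flb <= F y) ->
  is_gradient F Fdot ->
  locally_lipschitz Fdot ->
  (forall k, spd (M k)) ->
  (forall k, x k.+1 = x k - Fdot (x k) *m M k) ->
  forall Rad : R, 0 <= Rad ->
  exists C : R, 0 < C /\ forall k : nat,
    (F (x k.+1) - Flb) * chi x k.+1 0 Rad <=
    (F (x k) - Flb - dotv (Fdot (x k) *m M k) (Fdot (x k))
       + C * norm2 (Fdot (x k) *m M k) ^+ 2) * chi x k 0 Rad.
Proof.
move=> F_lb gradF lipG _ step Rad _.
have [K K_ge0 descK] := descent_on_ball gradF lipG Rad.
have [s s_gt0 gapS] := gradient_sqr_le_gap gradF lipG F_lb Rad.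
set a := (4 * s)^-1; have a_ge0 : 0 <= a by rewrite invr_ge0 mulr_ge0 // ltW.
exists (K + a + 1); split=> [|k]; first by rewrite ltr_wpDl // addr_ge0.
have in_ball j : norm2 (x j - 0) <= Rad -> `|x j| <= Rad.
  by rewrite subr0; exact: le_trans (mx_norm_le_norm2 _).
have u2_ge0 := sqr_ge0 (norm2 (Fdot (x k) *m M k)).
rewrite chiS /chi; case: ifP => [/in_ball xk1R|_];
  case: ifP => [/forallP /(_ ord_max) /= /in_ball xkR|_]; rewrite ?mulr0 ?mulr1 // !mulrDl mul1r.
- have := descK _ _ xkR xk1R.
  rewrite step [x k - _ - x k]addrAC subrr add0r dotvNr norm2N dotvC.
  have := mulr_ge0 a_ge0 u2_ge0; lra.
- have := gapS _ xkR; have := dotv_le_young (Fdot (x k) *m M k) (Fdot (x k)) s_gt0.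
  have := mulr_ge0 K_ge0 u2_ge0; rewrite -/a; lra.
Qed.
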